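(* Let $\mathcal R_3=\{(0^m1^n2^k,3^m): m,n,k\ge0,\ n\neq k\ \wedge\ (m=k\vee m=n)\}\subseteq\{0,1,2\}^*\times\{3\}^*$. There is no probabilistic finite state transducer computing $\mathcal R_3$ with probability $\alpha$ for any $\alpha>1/2$; in fact, there is no probabilistic finite state transducer computing $\mathcal R_3$ with an isolated cutpoint.
   Context: A probabilistic finite state transducer (pfst) is a tuple $T=(Q,\Sigma_1,\Sigma_2,V,f,q_0,Q_{\rm acc},Q_{\rm rej})$ with finite state set $Q$, finite input/output alphabets $\Sigma_1,\Sigma_2$, initial state $q_0$, disjoint accepting/rejecting sets $Q_{\rm acc},Q_{\rm rej}\subseteq Q$ (the other states are non-halting). For each $a\in\Sigma_1\cup\{\ddagger,\$\}$ ($\ddagger,\$$ are end markers) there is a stochastic $Q\times Q$ matrix $V_a$ and an output function $f_a:Q\to\Sigma_2^*$; $V_\$$ puts all probability on halting states. On input $v$ the machine reads $\ddagger v\$$; in state $q$ reading $a$ it appends $f_a(q)$ to the output tape and moves to state $p$ with probability $(V_a)_{qp}$; if $p$ is accepting (rejecting) it halts and accepts with the current output (rejects). $T(w|v)$ is the probability of accepting with output $w$ on input $v$. For $\alpha>1/2$, $T$ computes $\mathcal R$ with probability $\alpha$ if for all $v,w$: $(v,w)\in\mathcal R\Rightarrow T(w|v)\ge\alpha$ and $(v,w)\notin\mathcal R\Rightarrow T(w|v)\le1-\alpha$. $T$ computes $\mathcal R$ with isolated cutpoint if there are $0<\alpha<1$ and $\varepsilon>0$ such that for all $v,w$: $(v,w)\in\mathcal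 R\Rightarrow T(w|v)\ge\alpha+\varepsilon$ and $(v,w)\notin\mathcal R\Rightarrow T(w|v)\le\alpha-\varepsilon$. *)

From HB Require Import structures.
From mathcomp Require Import all_boot all_order all_algebra.
From mathcomp Require Import reals.
Set Implicit Arguments. Unset Strict Implicit. Unset Printing Implicit Defensive.
Import Order.TTheory GRing.Theory Num.Theory.
Local Open Scope ring_scope.

Inductive tsym (S : Type) := TSym of S | TStart | TEnd.
Arguments TStart {S}. Arguments TEnd {S}.

Record pfst (R : realType) (S1 S2 : finType) := Pfst {
  st : finType;
  q0 : st;
  Qacc : {set st};
  Qrej : {set st};
  V : tsym S1 -> st -> st -> R;
  f : tsym S1 -> st -> seq S2;
  acc_rej_disj : [disjoint Qacc & Qrej];
  V_ge0 : forall a q p, 0 <= V a q p;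
  V_stoch : forall a q, \sum_(p : st) V a q p = 1;
  V_end_halts : forall q p, p \notin Qacc -> p \notin Qrej -> V TEnd q p = 0
}.

Section Run.
Variables (R : realType) (S1 S2 : finType) (T : pfst R S1 S2).

(* acc_from s q u w : probability of accepting with output w, when in the
   (non-halting) state q with current output u, with s the rest of the tape. *)
Fixpoint acc_from (s : seq (tsym S1)) (q : st T) (u w : seq S2) : R :=
  match s with
  | [::] => 0
  | a :: s' =>
      let u' := u ++ @f _ _ _ T a q in
      \sum_(p : @st _ _ _ T) @V _ _ _ T a q p *
        (if p \in @Qacc _ _ _ T then (if u' == w then 1 else 0)
         else if p \in @Qrej _ _ _ T then 0
         else acc_from s' p u' w)
  end.

End Run.

Definition Tprob (R : realType) (S1 S2 : finType) (T : pfst R S1 S2)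
  (w : seq S2) (v : seq S1) : R :=
  @acc_from _ _ _ T (TStart :: rcons (map (@TSym S1) v) TEnd) (@q0 _ _ _ T) [::] w.

Definition computes_with_prob (R : realType) (S1 S2 : finType)
  (Rel : seq S1 -> seq S2 -> Prop) (T : pfst R S1 S2) (alpha : R) : Prop :=
  forall v w, (Rel v w -> alpha <= Tprob T w v) /\ (~ Rel v w -> Tprob T w v <= 1 - alpha).

Definition computes_isolated_cutpoint (R : realType) (S1 S2 : finType)
  (Rel : seq S1 -> seq S2 -> Prop) (T : pfst R S1 S2) : Prop :=
  exists alpha eps : R, [/\ 0 < alpha, alpha < 1, 0 < eps &
    forall v w, (Rel v w -> alpha + eps <= Tprob T w v) /\
                (~ Rel v w -> Tprob T w v <= alpha - eps)].

(* Input alphabet {0,1,2} = 'I_3; output alphabet {3} is a one-letter alphabet,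
   represented by 'I_1 whose unique letter (ord0) stands for the symbol 3. *)
Definition three : 'I_1 := ord0.

Definition R3 (v : seq 'I_3) (w : seq 'I_1) : Prop :=
  exists m n k : nat, [/\ n <> k, (m = k \/ m = n),
    v = nseq m (0 : 'I_3) ++ nseq n (1 : 'I_3) ++ nseq k (2 : 'I_3) &
    w = nseq m three].

From mathcomp Require Import all_boot all_order all_algebra reals.
From mathcomp Require Import zify lra.
Import Order.TTheory GRing.Theory Num.Theory.
Local Open Scope ring_scope.
Set Implicit Arguments. Unset Strict Implicit. Unset Printing Implicit Defensive.

(* Suppose T separates R3 with a gap 2 eps.  On the inputs 0^m 1^m 2^k with
   output 3^m, the acceptance probability must then drop by 2 eps from every
   k <> m to k = m.  While reading the block 2^k$, the moves that emit nothing
   and do not halt form a substochastic matrix N; quantizing the powers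
   N^(2^j) and applying the pigeonhole principle yields arbitrarily many shifts
   L_j = 2^j - 2^j0 with N^s close to N^(s + L_j) for all s >= 2^j0, whose
   windows [L_j, 2^j) are pairwise disjoint.  Since the output length m is
   fixed, every emitting move lowers the output still owed, and an induction on
   that length bounds the total drop over k = m - L_j, j in J, by
   (#|J| delta + 1)(c + 1), where c bounds the output on the end marker.  For
   #|J| large and delta small this contradicts the lower bound 2 eps #|J|. *)

Lemma pigeonhole_fiber (A B : finType) (g : A -> B) (P : nat) :
  (#|B| * P < #|A|)%N -> exists y, (P < #|[set x | g x == y]|)%N.
Proof.
move=> lt_BP_A; apply/existsP; apply: contraTT lt_BP_A => /existsPn small.
rewrite -leqNgt -sum1_card (partition_big g xpredT) //= -sum_nat_const.
apply: leq_sum => y _; move: (small y).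
by rewrite -leqNgt sum1dep_card cardsE.
Qed.

Lemma truncn_eq_dist_lt1 (R : archiRealFieldType) (x y : R) :
  0 <= x -> 0 <= y -> Num.truncn x = Num.truncn y -> `|x - y| < 1.
Proof.
move=> x_ge0 y_ge0 eq_xy.
have /andP[x_lb x_ub] := truncn_itv x_ge0; have /andP[y_lb y_ub] := truncn_itv y_ge0.
rewrite eq_xy -natr1 in x_lb x_ub; rewrite -natr1 in y_ub.
rewrite ltr_norml; apply/andP; split; lra.
Qed.

Lemma pow2_windows_disjoint (j0 j j' m : nat) : (j0 < j)%N -> (j0 < j')%N ->
  (2 ^ j - 2 ^ j0 <= m < 2 ^ j)%N -> (2 ^ j' - 2 ^ j0 <= m < 2 ^ j')%N -> j = j'.
Proof.
have far i i' : (j0 < i)%N -> (i < i')%N -> (2 ^ i <= 2 ^ i' - 2 ^ j0)%N.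
  move=> lt_j0i lt_ii'.
  have : (2 ^ j0 <= 2 ^ i)%N by rewrite leq_pexp2l // ltnW.
  have : (2 ^ i.+1 <= 2 ^ i')%N by rewrite leq_pexp2l.
  rewrite expnS; lia.
move=> lt_j0j lt_j0j' win win'; case: (ltngtP j j') => // [lt_jj'|lt_j'j].
  by have := far _ _ lt_j0j lt_jj'; lia.
by have := far _ _ lt_j0j' lt_j'j; lia.
Qed.

Section SubstochasticKernel.
Variables (R : realType) (I : finType) (N : I -> I -> R).

Fixpoint kpow (t : nat) (x y : I) : R :=
  if t is t'.+1 then \sum_z N x z * kpow t' z y else (x == y)%:R.

Lemma sum_delta_mul (x : I) (g : I -> R) : \sum_y (x == y)%:R * g y = g x.
Proof.
rewrite (bigD1 x) //= eqxx mul1r big1 ?addr0 // => y /negbTE.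
by rewrite eq_sym => ->; rewrite mul0r.
Qed.

Lemma sum_delta (x : I) : \sum_y (x == y)%:R = 1 :> R.
Proof. by under eq_bigr do rewrite -[_%:R]mulr1; rewrite sum_delta_mul. Qed.

Lemma kpowD u v x y : kpow (u + v) x y = \sum_z kpow u x z * kpow v z y.
Proof.
elim: u x => [|u IH] x /=; first by rewrite sum_delta_mul.
under eq_bigr do rewrite IH mulr_sumr.
rewrite exchange_big /=; apply: eq_bigr => z _.
by rewrite mulr_suml; apply: eq_bigr => z' _; rewrite mulrA.
Qed.

Lemma kpow1 x y : kpow 1 x y = N x y.
Proof.
by rewrite /=; under eq_bigr do rewrite mulrC eq_sym; rewrite sum_delta_mul.
Qed.

(* Discrete Duhamel formula for the recurrence [X (k+1) = Y k + N X k]. *)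
Lemma kpow_recE (X Y : nat -> I -> R) :
  (forall k x, X k.+1 x = Y k x + \sum_y N x y * X k y) ->
  forall k x, X k x = \sum_(0 <= t < k) \sum_y kpow t x y * Y (k - t.+1)%N y
                      + \sum_y kpow k x y * X 0%N y.
Proof.
move=> XS; elim=> [|k IH] x; first by rewrite big_geq // add0r sum_delta_mul.
rewrite XS big_nat_recl //= sum_delta_mul subSS subn0 -addrA; congr (_ + _).
under eq_bigr do rewrite IH mulrDr !mulr_sumr.
rewrite big_split /=; congr (_ + _).
  under eq_bigr do under eq_bigr do rewrite mulr_sumr.
  rewrite exchange_big /=; apply: eq_bigr => t _.
  rewrite exchange_big /=; apply: eq_bigr => y _.
  by rewrite subSS mulr_suml; apply: eq_bigr => z _; rewrite mulrA.
rewrite exchange_big /=; apply: eq_bigr => y _.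
by rewrite mulr_suml; apply: eq_bigr => z _; rewrite mulrA.
Qed.

Hypothesis N_ge0 : forall x y, 0 <= N x y.

Lemma kpow_ge0 t x y : 0 <= kpow t x y.
Proof.
elim: t x => [|t IH] x /=; first by rewrite ler0n.
by apply: sumr_ge0 => z _; rewrite mulr_ge0.
Qed.

(* Telescoping: the mass leaving at step [t] is at most that of [N ^ t] minus
   that of [N ^ (t + 1)]. *)
Lemma sum_kpow_exit_le1 (r : I -> R) :
  (forall x, \sum_y N x y + r x <= 1) ->
  forall m x, \sum_(0 <= t < m) \sum_y kpow t x y * r y <= 1.
Proof.
move=> Nr m x.
have step t : \sum_y kpow t x y * r y <= \sum_y kpow t x y - \sum_y kpow t.+1 x y.
  under [X in _ - X]eq_bigr do rewrite -addn1 kpowD.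
  rewrite [X in _ - X]exchange_big -sumrB; apply: ler_sum => y _.
  rewrite -mulr_sumr -{2}[kpow t x y]mulr1 -mulrBr ler_wpM2l ?kpow_ge0 //.
  by under eq_bigr do rewrite kpow1; rewrite lerBrDl.
apply: le_trans (ler_sum_nat (fun t _ => step t)) _.
under eq_bigr do rewrite -opprB.
rewrite sumrN telescope_sumr // opprB /= lerBlDr.
rewrite sum_delta lerDl; apply: sumr_ge0 => y _; exact: kpow_ge0.
Qed.

Hypothesis N_row_le1 : forall x, \sum_y N x y <= 1.

Lemma kpow_row_le1 t x : \sum_y kpow t x y <= 1.
Proof.
elim: t x => [|t IH] x /=; first by rewrite sum_delta.
rewrite exchange_big /=; apply: le_trans (N_row_le1 x); apply: ler_sum => z _.
by rewrite -mulr_sumr ler_piMr.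
Qed.

Lemma kpow_le1 t x y : kpow t x y <= 1.
Proof.
apply: le_trans (kpow_row_le1 t x).
by rewrite (bigD1 y) //= lerDl; apply: sumr_ge0 => z _; exact: kpow_ge0.
Qed.

Lemma kpow_shift_close (a b s : nat) (e : R) :
  (forall x y, `|kpow a x y - kpow b x y| <= e) -> (a <= s)%N ->
  forall x, \sum_y `|kpow s x y - kpow (s - a + b) x y| <= #|I|%:R * e.
Proof.
move=> close_ab le_as x; rewrite -sum1_card natr_sum mulr_suml.
apply: ler_sum => y _; rewrite mul1r -{1}(subnK le_as) !kpowD -sumrB.
under eq_bigr do rewrite -mulrBr.
apply: le_trans (ler_norm_sum _ _ _) _.
apply: le_trans (_ : \sum_z kpow (s - a) x z * e <= _).
  by apply: ler_sum => z _; rewrite normrM ger0_norm ?kpow_ge0 ?ler_wpM2l ?kpow_ge0.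
have e_ge0 : 0 <= e by apply: le_trans (close_ab x x).
by rewrite -mulr_suml ler_piMl ?kpow_row_le1.
Qed.

Definition kpow_cell (K t : nat) : {ffun I * I -> 'I_K.+1} :=
  [ffun xy : I * I => inord (Num.truncn (kpow t xy.1 xy.2 * K%:R)) : 'I_K.+1].

Lemma kpow_cell_close (K t t' : nat) : (0 < K)%N -> kpow_cell K t = kpow_cell K t' ->
  forall x y, `|kpow t x y - kpow t' x y| <= K%:R^-1.
Proof.
move=> K_gt0 eq_cell x y; have K_pos : 0 < K%:R :> R by rewrite ltr0n.
have scaled_ge0 u : 0 <= kpow u x y * K%:R by rewrite mulr_ge0 ?kpow_ge0 ?ler0n.
have truncn_small u : (Num.truncn (kpow u x y * K%:R) < K.+1)%N.
  rewrite truncn_lt_nat // (@le_lt_trans _ _ K%:R) ?ltr_nat //.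
  by rewrite ler_piMl ?ler0n ?kpow_le1.
have := congr1 (fun g : {ffun I * I -> 'I_K.+1} => val (g (x, y))) eq_cell.
rewrite /= !ffunE !inordK //.
move/(truncn_eq_dist_lt1 (scaled_ge0 t) (scaled_ge0 t'))/ltW.
rewrite -mulrBl normrM (gtr0_norm K_pos) => close.
by rewrite -[X in _ <= X]mul1r ler_pdivlMr.
Qed.

(* Pigeonhole on a [1/K]-quantization of the powers [N ^ (2 ^ j)] gives many
   [j > j0] with [N ^ (2 ^ j)] close to [N ^ (2 ^ j0)]: then [N ^ s] is close to
   [N ^ (s + 2 ^ j - 2 ^ j0)] as soon as [s >= 2 ^ j0]. *)
Lemma kpow_shift_family (P : nat) (e : R) : 0 < e ->
  exists n (J : {set 'I_n}) (L : 'I_n -> nat) (a : nat), [/\ (P <= #|J|)%N,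
    {in J, forall j, 0 < L j}%N,
    {in J &, forall j j' m, L j <= m < L j + a -> L j' <= m < L j' + a -> j = j'}%N &
    {in J, forall j s x, (a <= s)%N -> \sum_y `|kpow s x y - kpow (s + L j) x y| <= e}].
Proof.
move=> e_gt0; pose K := (Num.truncn (#|I|%:R / e)).+1.
have IK_le_e : #|I|%:R * K%:R^-1 <= e.
  have /andP[_] := truncn_itv (divr_ge0 (ler0n _ #|I|) (ltW e_gt0)).
  by rewrite ltr_pdivrMr // ler_pdivrMr ?ltr0n // mulrC => /ltW.
pose n := (#|{ffun I * I -> 'I_K.+1}| * P).+1.
have [c big_fiber] : exists c, (P < #|[set j : 'I_n | kpow_cell K (2 ^ j) == c]|)%N.
  by apply: (@pigeonhole_fiber 'I_n); rewrite card_ord.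
set J0 := [set j | _] in big_fiber.
have [j1 j1J0] : exists j1, j1 \in J0.
  by apply/set0Pn; rewrite -card_gt0 (leq_ltn_trans _ big_fiber).
have [j0 j0J0 j0_min] := arg_minnP (fun j : 'I_n => val j) j1J0.
have {}j0J0 : j0 \in J0 := j0J0.
have j0_lt j : j \in J0 :\ j0 -> (j0 < j)%N.
  by rewrite in_setD1 => /andP[ne_jj0 jJ0]; rewrite ltn_neqAle eq_sym ne_jj0 j0_min.
have pow_j0_le j : j \in J0 :\ j0 -> (2 ^ j0 <= 2 ^ j)%N.
  by move=> jJ; rewrite leq_pexp2l // ltnW ?j0_lt.
exists n, (J0 :\ j0), (fun j => 2 ^ j - 2 ^ j0)%N, (2 ^ j0)%N; split.
- by move: big_fiber; rewrite (cardsD1 j0 J0) j0J0.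
- by move=> j jJ; rewrite subn_gt0 ltn_exp2l ?j0_lt.
- move=> j j' jJ j'J m; rewrite !subnK ?pow_j0_le // => win win'.
  exact/val_inj/(pow2_windows_disjoint (j0_lt _ jJ) (j0_lt _ j'J) win win').
move=> j jJ s x le_s.
have -> : (s + (2 ^ j - 2 ^ j0) = s - 2 ^ j0 + 2 ^ j)%N by have := pow_j0_le j jJ; lia.
apply: le_trans IK_le_e; apply: kpow_shift_close le_s x.
apply: kpow_cell_close => //.
by move: j0J0 jJ; rewrite in_setD1 !inE => /eqP -> /andP[_ /eqP ->].
Qed.

End SubstochasticKernel.

Section Run.
Variables (R : realType) (S1 S2 : finType) (T : pfst R S1 S2).

Lemma acc_from_catl (s : seq (tsym S1)) (q : st T) (x u w : seq S2) :
  acc_from s q (x ++ u) (x ++ w) = acc_from s q u w.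
Proof.
elim: s q u => [//|a s IH] q u /=; apply: eq_bigr => p _.
by rewrite -catA IH eqseq_cat // eqxx.
Qed.

Lemma acc_from_long (s : seq (tsym S1)) (q : st T) (u w : seq S2) :
  (size w < size u)%N -> acc_from s q u w = 0.
Proof.
elim: s q u => [//|a s IH] q u /= lt_wu; apply: big1 => p _.
have lt_wu' : (size w < size (u ++ f a q))%N.
  by rewrite size_cat (leq_trans lt_wu) ?leq_addr.
have /negbTE -> : u ++ f a q != w by apply: contraTneq lt_wu' => ->; rewrite ltnn.
by rewrite IH // !if_same mulr0.
Qed.

Lemma acc_from_ge0 (s : seq (tsym S1)) (q : st T) (u w : seq S2) :
  0 <= acc_from s q u w.
Proof.
elim: s q u => [//|a s IH] q u /=; apply: sumr_ge0 => p _.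
by rewrite mulr_ge0 ?V_ge0 //; case: ifP => _; [case: eqP|case: ifP].
Qed.

(* Runs halting inside the common prefix [s] contribute equally to both sides;
   the other runs mix the hypothesis convexly. *)
Lemma acc_from_cat_diff_le (I : finType) (J : {set I}) (t : I -> seq (tsym S1))
    (t0 : seq (tsym S1)) (w : seq S2) (c : R) :
  0 <= c ->
  (forall (q : st T) u, \sum_(j in J) (acc_from (t j) q u w - acc_from t0 q u w) <= c) ->
  forall s (q : st T) u, \sum_(j in J) (acc_from (s ++ t j) q u w - acc_from (s ++ t0) q u w) <= c.
Proof.
move=> c_ge0 le_c; elim=> [|a s IH] q u //=.
set g := fun (t' : seq (tsym S1)) (p : st T) =>
  if p \in Qacc T then (if u ++ f a q == w then 1 else 0)
  else if p \in Qrej T then 0 else acc_from t' p (u ++ f a q) w.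
under eq_bigr do rewrite -/(g _ _) -/(g _ _) -sumrB.
under eq_bigr do under eq_bigr do rewrite -mulrBr.
rewrite exchange_big /= -[c]mul1r -(V_stoch a q) mulr_suml.
apply: ler_sum => p _; rewrite -mulr_sumr ler_wpM2l ?V_ge0 // /g.
case: (p \in Qacc T); first by rewrite big1 // => j _; rewrite subrr.
case: (p \in Qrej T); first by rewrite big1 // => j _; rewrite subrr.
exact: IH.
Qed.

End Run.

Lemma seqI1_nseq (u : seq 'I_1) : u = nseq (size u) three.
Proof. by elim: u => //= x u <-; rewrite [x]ord1. Qed.

Lemma seqI1_eqE (u v : seq 'I_1) : (u == v) = (size u == size v).
Proof.
apply/eqP/eqP => [-> //|eq_size].
by rewrite [u]seqI1_nseq [v]seqI1_nseq eq_size.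
Qed.

Section UnaryOutput.
Variables (R : realType) (S1 : finType) (T : pfst R S1 'I_1).
Local Notation Q := (st T).

Lemma acc_from_nseq s (q : Q) u r : acc_from s q u (nseq r three) =
  if (size u <= r)%N then acc_from s q [::] (nseq (r - size u) three) else 0.
Proof.
case: leqP => [le_ur|lt_ru]; last by rewrite acc_from_long ?size_nseq.
rewrite -(acc_from_catl s q u [::]) cats0; congr acc_from.
by rewrite [in RHS](seqI1_nseq u) -nseqD size_nseq subnKC.
Qed.

Variable b : S1.
Local Notation Vb := (@V _ _ _ T (TSym b)).

Definition block k : seq (tsym S1) := rcons (nseq k (TSym b)) TEnd.
Definition acc_block k (q : Q) d : R := acc_from (block k) q [::] (nseq d three).
Definition out_len (q : Q) : nat := size (f (TSym b) q).
Definition nonhalting (p : Q) : bool := (p \notin Qacc T) && (p \notin Qrej T).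

(* One [b]-step from [q] either halts, or moves silently (no output, no
   halting), or emits [out_len q > 0] letters and continues. *)
Definition silent (q p : Q) : R :=
  if (out_len q == 0%N) && nonhalting p then Vb q p else 0.
Definition emit (q : Q) : R :=
  if out_len q == 0%N then 0 else \sum_(p | nonhalting p) Vb q p.
Definition acc_now d (q : Q) : R := \sum_(p in Qacc T) Vb q p * (out_len q == d)%:R.
Definition emit_acc (h : Q -> nat -> R) d (q : Q) : R :=
  if out_len q == 0%N then 0 else
  \sum_(p | nonhalting p) Vb q p * (if (out_len q <= d)%N then h p (d - out_len q)%N else 0).

Lemma acc_block_rec k q d : acc_block k.+1 q d =
  acc_now d q + emit_acc (acc_block k) d q + \sum_p silent q p * acc_block k p d.
Proof.
rewrite /acc_block /= (bigID (mem (Qacc T))) /= -addrA; congr (_ + _).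
  by apply: eq_bigr => p ->; rewrite seqI1_eqE size_nseq; case: eqP.
rewrite /emit_acc /silent; under eq_bigr do rewrite acc_from_nseq -/(out_len q).
rewrite (bigID (mem (Qrej T))) /= [X in X + _]big1 => [|p /andP[/negbTE -> ->]]; last first.
  by rewrite mulr0.
rewrite add0r; transitivity (\sum_(p | nonhalting p)
    Vb q p * (if (out_len q <= d)%N then acc_block k p (d - out_len q) else 0)).
  by apply: eq_bigr => p /andP[/negbTE -> /negbTE ->].
case: eqP => [o0|_]; last by rewrite [X in _ + X]big1 ?addr0 // => p _; rewrite mul0r.
rewrite add0r big_mkcond /=; apply: eq_bigr => p _.
by rewrite o0 subn0; case: ifP; rewrite ?mul0r.
Qed.

Lemma silent_ge0 q p : 0 <= silent q p.
Proof. by rewrite /silent; case: ifP => // _; exact: V_ge0. Qed.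

Lemma emit_ge0 q : 0 <= emit q.
Proof. by rewrite /emit; case: ifP => // _; apply: sumr_ge0 => p _; exact: V_ge0. Qed.

Lemma silent_emit_le1 q : \sum_p silent q p + emit q <= 1.
Proof.
rewrite -(V_stoch (TSym b) q) /emit /silent [X in _ <= X](bigID nonhalting) /=.
case: eqP => _ /=; last by rewrite big1 // add0r lerDl sumr_ge0 // => p _; exact: V_ge0.
rewrite addr0 -big_mkcond lerDl; apply: sumr_ge0 => p _; exact: V_ge0.
Qed.

Lemma silent_row_le1 q : \sum_p silent q p <= 1.
Proof. by apply: le_trans (silent_emit_le1 q); rewrite lerDl emit_ge0. Qed.

Lemma acc_now_ge0 d q : 0 <= acc_now d q.
Proof. by apply: sumr_ge0 => p _; rewrite mulr_ge0 ?V_ge0 ?ler0n. Qed.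

Lemma ler_emit_acc (h h' : Q -> nat -> R) d q :
  (forall p d', h p d' <= h' p d') -> emit_acc h d q <= emit_acc h' d q.
Proof.
move=> le_hh'; rewrite /emit_acc; case: ifP => // _.
by apply: ler_sum => p _; rewrite ler_wpM2l ?V_ge0 //; case: ifP.
Qed.

Lemma emit_acc_ge0 (h : Q -> nat -> R) d q :
  (forall p d', 0 <= h p d') -> 0 <= emit_acc h d q.
Proof.
move=> h_ge0; rewrite /emit_acc; case: ifP => // _.
by apply: sumr_ge0 => p _; rewrite mulr_ge0 ?V_ge0 //; case: ifP.
Qed.

Lemma emit_accB (h h' : Q -> nat -> R) d q :
  emit_acc h d q - emit_acc h' d q = emit_acc (fun p d' => h p d' - h' p d') d q.
Proof.
rewrite /emit_acc; case: ifP => _; first by rewrite subrr.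
by rewrite -sumrB; apply: eq_bigr => p _; rewrite -mulrBr; case: ifP; rewrite ?subrr.
Qed.

(* Every emitting step shortens the output still to be produced. *)
Lemma emit_acc_le (h : Q -> nat -> R) (c : R) d q : 0 <= c ->
  (forall p d', (d' < d)%N -> h p d' <= c) -> emit_acc h d q <= emit q * c.
Proof.
move=> c_ge0 h_le; rewrite /emit_acc /emit.
case: eqP => [|/eqP o_gt0]; first by rewrite mul0r.
rewrite mulr_suml; apply: ler_sum => p _; rewrite ler_wpM2l ?V_ge0 //.
by case: leqP => // le_od; apply: h_le; rewrite -lt0n in o_gt0; lia.
Qed.

Lemma emit_acc_sum (I : finType) (J : {set I}) (h : I -> Q -> nat -> R) d q :
  \sum_(j in J) emit_acc (h j) d q = emit_acc (fun p d' => \sum_(j in J) h j p d') d q.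
Proof.
rewrite /emit_acc; case: ifP => _; first by rewrite big1.
rewrite exchange_big /=; apply: eq_bigr => p _; rewrite -mulr_sumr.
by case: ifP => // _; rewrite big1.
Qed.

Definition end_out_max : nat := \max_(q : Q) size (f TEnd q).

Lemma acc_block0_le1 q d : acc_block 0 q d <= 1.
Proof.
rewrite /acc_block /= -[X in _ <= X](V_stoch TEnd q); apply: ler_sum => p _.
by rewrite ler_piMr ?V_ge0 //; case: ifP => _; [case: eqP|case: ifP].
Qed.

Lemma acc_block0_eq0 q d : (end_out_max < d)%N -> acc_block 0 q d = 0.
Proof.
move=> lt_d; rewrite /acc_block /=; apply: big1 => p _.
have /negbTE -> : f TEnd q != nseq d three.
  rewrite seqI1_eqE size_nseq neq_ltn (leq_ltn_trans _ lt_d) //.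
  exact: leq_bigmax.
by rewrite !if_same mulr0.
Qed.

Local Notation spow := (kpow silent).

Lemma spow_ge0 t x y : 0 <= spow t x y.
Proof. exact: (kpow_ge0 silent_ge0). Qed.

Definition gain (L m : nat) (q : Q) d : R :=
  if (L <= m)%N then Num.max 0 (acc_block (m - L) q d - acc_block m q d) else 0.

Definition silent_gain (L m : nat) (q : Q) d : R :=
  if (L <= m)%N then Num.max 0 (\sum_x (spow (m - L) q x - spow m q x) * acc_block 0 x d)
  else 0.

Lemma gain_ge0 L m q d : 0 <= gain L m q d.
Proof. by rewrite /gain; case: ifP => // _; rewrite le_max lexx. Qed.

Lemma acc_block_shift_le L m q d : (L <= m)%N ->
  acc_block (m - L) q d - acc_block m q d <=
    \sum_x (spow (m - L) q x - spow m q x) * acc_block 0 x d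
  + \sum_(0 <= t < m) \sum_x spow t q x * emit_acc (gain L (m - t.+1)) d x.
Proof.
move=> le_Lm; pose Y k x := acc_now d x + emit_acc (acc_block k) d x.
have accE := kpow_recE (X := fun k x => acc_block k x d) (Y := Y)
  (fun k x => acc_block_rec k x d).
rewrite !accE (big_cat_nat (leq0n (m - L)) (leq_subr L m)) /=.
rewrite [X in _ <= _ + X](big_cat_nat (leq0n (m - L)) (leq_subr L m)) /=.
set A := \sum_(0 <= t < m - L) \sum_y spow t q y * Y (m - L - t.+1)%N y.
set B := \sum_(0 <= t < m - L) \sum_y spow t q y * Y (m - t.+1)%N y.
set B' := \sum_(m - L <= t < m) _.
set G := \sum_(0 <= t < m - L) \sum_x spow t q x * emit_acc (gain L (m - t.+1)) d x.
set G' := \sum_(m - L <= t < m) _.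
have B'_ge0 : 0 <= B'.
  apply: sumr_ge0 => t _; apply: sumr_ge0 => x _; rewrite mulr_ge0 ?spow_ge0 //.
  by rewrite addr_ge0 ?acc_now_ge0 ?emit_acc_ge0 // => p d'; exact: acc_from_ge0.
have G'_ge0 : 0 <= G'.
  apply: sumr_ge0 => t _; apply: sumr_ge0 => x _; rewrite mulr_ge0 ?spow_ge0 //.
  by rewrite emit_acc_ge0 // => p d'; exact: gain_ge0.
have AB_le : A - B <= G.
  rewrite -sumrB; apply: ler_sum_nat => t /andP[_ lt_t]; rewrite -sumrB.
  apply: ler_sum => x _; rewrite -mulrBr ler_wpM2l ?spow_ge0 //.
  rewrite /Y opprD addrACA subrr add0r emit_accB subnAC; apply: ler_emit_acc => p d'.
  by rewrite /gain ifT ?le_max ?lexx ?orbT //; lia.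
under [X in _ <= X + _]eq_bigr do rewrite mulrBl.
rewrite sumrB; lra.
Qed.

Lemma gain_le L m q d : gain L m q d <= silent_gain L m q d
  + \sum_(0 <= t < m) \sum_x spow t q x * emit_acc (gain L (m - t.+1)) d x.
Proof.
have rest_ge0 : 0 <= \sum_(0 <= t < m) \sum_x spow t q x * emit_acc (gain L (m - t.+1)) d x.
  apply: sumr_ge0 => t _; apply: sumr_ge0 => x _; rewrite mulr_ge0 ?spow_ge0 //.
  by rewrite emit_acc_ge0 // => p d'; exact: gain_ge0.
rewrite /gain /silent_gain; case: ifP => le_Lm; last by rewrite add0r.
rewrite ge_max addr_ge0 ?le_max ?lexx //=.
by rewrite (le_trans (acc_block_shift_le q d le_Lm)) // lerD2r le_max lexx orbT.
Qed.

Section ShiftFamily.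
Variables (I : finType) (J : {set I}) (L : I -> nat) (a : nat) (e : R).
Hypothesis e_ge0 : 0 <= e.
Hypothesis windows_disjoint :
  {in J &, forall j j' m, L j <= m < L j + a -> L j' <= m < L j' + a -> j = j'}%N.
Hypothesis shift_close :
  {in J, forall j s x, (a <= s)%N -> \sum_y `|spow s x y - spow (s + L j) x y| <= e}.

Lemma sum_window_le1 m : \sum_(j in J) ((L j <= m < L j + a)%N)%:R <= 1 :> R.
Proof.
have [j0 /andP[j0J win0]|no_win] := pickP (fun j => (j \in J) && (L j <= m < L j + a)%N).
  rewrite (bigD1 j0) //= win0 big1 ?addr0 // => j /andP[jJ ne_jj0].
  case: (boolP (L j <= m < L j + a)%N) => // win.
  by rewrite (windows_disjoint jJ j0J win win0) eqxx in ne_jj0.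
by rewrite big1 ?ler01 // => j jJ; have := no_win j; rewrite jJ /= => ->.
Qed.

(* Outside the window [L j <= m < L j + a] the silent dynamics has already
   forgotten the shift [L j]. *)
Lemma silent_gain_le j m q d : j \in J ->
  silent_gain (L j) m q d <= e + ((L j <= m < L j + a)%N)%:R.
Proof.
move=> jJ; rewrite /silent_gain; case: ifP => [le_Lm|_]; last by rewrite addr_ge0.
rewrite ge_max addr_ge0 //=; case: ltnP => [lt_m|le_m] /=.
  apply: le_trans (_ : 1 <= _); last by rewrite lerDr.
  apply: le_trans (kpow_row_le1 silent_ge0 silent_row_le1 (m - L j) q).
  apply: ler_sum => x _; rewrite mulrBl lerBlDr ler_wpDr ?mulr_ge0 ?spow_ge0 //.
    exact: acc_from_ge0.
  by rewrite ler_piMr ?spow_ge0 ?acc_block0_le1.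
have le_as : (a <= m - L j)%N by lia.
rewrite addr0; apply: le_trans (shift_close jJ q le_as); rewrite subnK //.
apply: ler_sum => x _; apply: le_trans (ler_norm _) _.
rewrite normrM ler_piMr ?normr_ge0 // ger0_norm ?acc_block0_le1 //.
exact: acc_from_ge0.
Qed.

Lemma sum_silent_gain_le m q d : \sum_(j in J) silent_gain (L j) m q d <=
  (if (d <= end_out_max)%N then #|J|%:R * e + 1 else 0).
Proof.
case: leqP => [_|lt_d]; last first.
  rewrite big1 // => j _; rewrite /silent_gain; case: ifP => // _.
  by rewrite big1 ?maxxx // => x _; rewrite acc_block0_eq0 ?mulr0.
apply: le_trans (ler_sum _ (fun j jJ => silent_gain_le m q d jJ)) _.
by rewrite big_split /= sumr_const mulr_natl lerD2l sum_window_le1.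
Qed.

(* Induction on the length [d] of the output still to be produced: the
   silent part costs [#|J| e + 1] once, emitting steps recurse on smaller [d]. *)
Lemma sum_gain_le d m q : \sum_(j in J) gain (L j) m q d <=
  (#|J|%:R * e + 1) * (minn d.+1 end_out_max.+1)%:R.
Proof.
have C_ge0 : 0 <= #|J|%:R * e + 1 by rewrite addr_ge0 ?mulr_ge0.
elim/ltn_ind: d m q => d IH m q.
apply: le_trans (ler_sum _ (fun j _ => gain_le (L j) m q d)) _.
rewrite big_split /= exchange_big /=.
apply: le_trans (lerD (sum_silent_gain_le m q d)
  (_ : _ <= (#|J|%:R * e + 1) * (minn d end_out_max.+1)%:R)) _.
  apply: le_trans (_ : \sum_(0 <= t < m) \sum_x spow t q x * emit x *
      ((#|J|%:R * e + 1) * (minn d end_out_max.+1)%:R) <= _); last first.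
    under eq_bigr do rewrite -mulr_suml.
    rewrite -mulr_suml ler_piMl ?mulr_ge0 //.
    exact: (sum_kpow_exit_le1 silent_ge0 silent_emit_le1 m q).
  apply: ler_sum_nat => t _; rewrite exchange_big /=; apply: ler_sum => x _.
  rewrite -mulr_sumr -mulrA ler_wpM2l ?spow_ge0 // emit_acc_sum.
  apply: emit_acc_le => [|p d' lt_d']; first by rewrite mulr_ge0.
  apply: le_trans (IH _ lt_d' _ _) _; rewrite ler_wpM2l // ler_nat.
  by rewrite leq_min geq_minr andbT (leq_trans (geq_minl _ _)).
case: leqP => [le_d|lt_d]; last first.
  by rewrite add0r (minn_idPr lt_d) (minn_idPr (_ : end_out_max.+1 <= d.+1)%N) // ltnW.
rewrite (minn_idPl (leqW le_d)) (minn_idPl _) ?ltnS //.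
by rewrite -addn1 natrD mulrDr mulr1 addrC.
Qed.

Lemma sum_acc_shift_le m : {in J, forall j, L j <= m}%N -> forall s (q : Q) u,
  \sum_(j in J) (acc_from (s ++ block (m - L j)) q u (nseq m three)
                - acc_from (s ++ block m) q u (nseq m three))
  <= (#|J|%:R * e + 1) * end_out_max.+1%:R.
Proof.
move=> le_Lm; have C_ge0 : 0 <= #|J|%:R * e + 1 by rewrite addr_ge0 ?mulr_ge0.
apply: acc_from_cat_diff_le => [|q u]; first by rewrite mulr_ge0.
under eq_bigr do rewrite 2![acc_from _ _ u _]acc_from_nseq.
case: leqP => _; last by rewrite big1 ?mulr_ge0 // => j _; rewrite subrr.
apply: le_trans (_ : \sum_(j in J) gain (L j) m q (m - size u) <= _).
  by apply: ler_sum => j jJ; rewrite /gain le_Lm // le_max lexx orbT.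
apply: le_trans (sum_gain_le _ _ _) _.
by rewrite ler_wpM2l // ler_nat geq_minr.
Qed.

End ShiftFamily.

End UnaryOutput.

Definition word (m n k : nat) : seq 'I_3 :=
  nseq m (0 : 'I_3) ++ nseq n (1 : 'I_3) ++ nseq k (2 : 'I_3).

Lemma R3_word m k : k <> m -> R3 (word m m k) (nseq m three).
Proof. by move=> ne_km; exists m, m, k; split; [move=> /esym|right|..]. Qed.

Lemma R3_word_diag m : ~ R3 (word m m m) (nseq m three).
Proof.
case=> m' [n'] [k'] [ne_nk _ eq_v _]; apply: ne_nk.
have count_eq (i : 'I_3) := congr1 (count (pred1 i)) eq_v.
have := count_eq 1; have := count_eq 2.
by rewrite /word !count_cat !count_nseq /=; lia.
Qed.

Lemma Tprob_word (R : realType) (T : pfst R 'I_3 'I_1) m k :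
  Tprob T (nseq m three) (word m m k) =
  acc_from ((TStart :: map (@TSym _) (nseq m 0 ++ nseq m 1)) ++ block (2 : 'I_3) k)
    (q0 T) [::] (nseq m three).
Proof. by rewrite /Tprob /word /block catA !map_cat rcons_cat !map_nseq. Qed.

Lemma R3_no_separation (R : realType) (T : pfst R 'I_3 'I_1) (alpha eps : R) : 0 < eps ->
  ~ (forall v w, (R3 v w -> alpha + eps <= Tprob T w v) /\
                 (~ R3 v w -> Tprob T w v <= alpha - eps)).
Proof.
move=> eps_gt0 sep; pose c : R := (end_out_max T).+1%:R.
have c_gt0 : 0 < c by rewrite ltr0n.
pose P := (Num.truncn (c / eps)).+1.
have c_lt_P : c < P%:R * eps.
  have /andP[_] := truncn_itv (divr_ge0 (ltW c_gt0) (ltW eps_gt0)).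
  by rewrite ltr_pdivrMr.
have [n [J [L [a [P_le L_gt0 disj close]]]]] :=
  kpow_shift_family (silent_ge0 (T := T) 2) (silent_row_le1 (T := T) 2) P
    (divr_gt0 eps_gt0 c_gt0).
pose m := \max_(j in J) L j.
have le_Lm : {in J, forall j, L j <= m}%N by move=> j jJ; exact: leq_bigmax_cond.
have upper := sum_acc_shift_le (ltW (divr_gt0 eps_gt0 c_gt0)) disj close le_Lm
  (TStart :: map (@TSym _) (nseq m 0 ++ nseq m 1)) (q0 T) [::].
apply/negP: upper; rewrite -ltNge.
apply: (@lt_le_trans _ _ (\sum_(j in J) eps *+ 2)); last first.
  apply: ler_sum => j jJ; rewrite -!Tprob_word.
  have ne_m : (m - L j)%N <> m by have := L_gt0 j jJ; have := le_Lm j jJ; lia.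
  by have := (sep _ _).1 (R3_word ne_m); have := (sep _ _).2 (@R3_word_diag m); lra.
have P_J : P%:R * eps <= #|J|%:R * eps by apply: ler_wpM2r; [exact: ltW|rewrite ler_nat].
rewrite sumr_const -/c mulrDl mul1r -mulrA mulfVK ?gt_eqF // -[_ *+ #|J|]mulr_natl.
lra.
Qed.

Theorem theorem8 (R : realType) :
  (forall (alpha : R), 1/2 < alpha ->
     forall T : pfst R 'I_3 'I_1, ~ computes_with_prob R3 T alpha) /\
  (forall T : pfst R 'I_3 'I_1, ~ computes_isolated_cutpoint R3 T).
Proof.
split=> [alpha half_lt T sep|T [alpha [eps [_ _ eps_gt0 sep]]]]; last first.
  exact: R3_no_separation eps_gt0 sep.
apply: (@R3_no_separation R T (1/2) (alpha - 1/2)); first by rewrite subr_gt0.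
by move=> v w; have [accept reject] := sep v w; split=> [/accept|/reject]; lra.
Qed.
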